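(* Let $J=[a,b]$, $\gamma:J\to\mathbb{C}\setminus\Omega$ a $C^1$ path with $|\gamma'(\tau)|\le1$ for all $\tau\in J$, and $\eta:\mathbb{C}\to[0,\infty)$ a $1$-Lipschitz function with zero set $\Omega$. Let $D(\tau,\underline\zeta)=\eta(\dot\zeta_1)+\cdots+\eta(\dot\zeta_n)+\eta(\gamma(\tau)-S_n(\underline\zeta))$ and $X_i(\tau,\underline\zeta)=\frac{\eta(\dot\zeta_i)}{D(\tau,\underline\zeta)}\gamma'(\tau)$ for $i=1,\ldots,n$. Then for any $\tau\in J$ and $\underline\zeta,\underline\zeta'\in\mathcal S_\Omega^n$, \[ \sum_{i=1}^n|X_i(\tau,\underline\zeta')-X_i(\tau,\underline\zeta)|\le\frac{3}{D(\tau,\underline\zeta')}\sum_{i=1}^n|\dot\zeta'_i-\dot\zeta_i|. \]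
   Context: $\Omega\subset\mathbb{C}$ closed, discrete, stable under addition, $0\in\Omega$ (so $D>0$ everywhere). $\mathcal S_\Omega$: Riemann surface of classes, modulo homotopy with fixed endpoints, of paths $\gamma:[0,1]\to\mathbb{C}$ with $\gamma\equiv0$ or ($\gamma(0)=0$, $\gamma((0,1])\subset\mathbb{C}\setminus\Omega$), with projection $\pi_\Omega([\gamma])=\gamma(1)$; $\dot\zeta=\pi_\Omega(\zeta)$; $S_n(\underline\zeta)=\dot\zeta_1+\cdots+\dot\zeta_n$ for $\underline\zeta=(\zeta_1,\ldots,\zeta_n)\in\mathcal S_\Omega^n$. *)

From Stdlib Require Import Reals.
From Coquelicot Require Import Coquelicot.
Open Scope R_scope.

Definition discrete_set (Om : C -> Prop) : Prop :=
  forall w, Om w -> exists eps : R, 0 < eps /\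
    forall z, Om z -> Cmod (z - w) < eps -> z = w.

Definition good_Omega (Om : C -> Prop) : Prop :=
  closed Om /\ discrete_set Om /\
  (forall z w, Om z -> Om w -> Om (z + w)%C) /\ Om (RtoC 0).

(* A path p : [0,1] -> C (given as a function on R, only its values on
   [0,1] matter) is a representative of a point of S_Omega:
   p continuous on [0,1], and either p == 0 on [0,1],
   or p(0) = 0 and p((0,1]) avoids Omega. *)
Definition S_Omega_path (Om : C -> Prop) (p : R -> C) : Prop :=
  (forall t, 0 <= t <= 1 ->
     filterlim p (within (fun s => 0 <= s <= 1) (locally t)) (locally (p t))) /\
  ((forall t, 0 <= t <= 1 -> p t = RtoC 0) \/
   (p 0 = RtoC 0 /\ forall t, 0 < t <= 1 -> ~ Om (p t))).

Definition pi_Omega (p : R -> C) : C := p 1.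

Definition C1_on (a b : R) (g g' : R -> C) : Prop :=
  (forall t, a <= t <= b ->
     filterlim (fun s => scal (/ (s - t)) (minus (g s) (g t)))
       (within (fun s => a <= s <= b /\ s <> t) (locally t)) (locally (g' t))) /\
  (forall t, a <= t <= b ->
     filterlim g' (within (fun s => a <= s <= b) (locally t)) (locally (g' t))).

Fixpoint rsum (n : nat) (f : nat -> R) : R :=
  match n with O => 0 | S m => rsum m f + f m end.
Fixpoint csum (n : nat) (f : nat -> C) : C :=
  match n with O => RtoC 0 | S m => (csum m f + f m)%C end.

(* S_n(zeta) = zeta_1' + ... + zeta_n' (dots = projections) *)
Definition S_n (n : nat) (zeta : nat -> R -> C) : C :=
  csum n (fun i => pi_Omega (zeta i)).

Definition D_fun (eta : C -> R) (g : R -> C) (n : nat) (tau : R)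
  (zeta : nat -> R -> C) : R :=
  rsum n (fun i => eta (pi_Omega (zeta i))) + eta (g tau - S_n n zeta)%C.

Definition X_fun (eta : C -> R) (g g' : R -> C) (n : nat) (tau : R)
  (zeta : nat -> R -> C) (i : nat) : C :=
  (RtoC (eta (pi_Omega (zeta i)) / D_fun eta g n tau zeta) * g' tau)%C.

From Stdlib Require Import Reals Lra Lia.
From Coquelicot Require Import Coquelicot.
Open Scope R_scope.

(* Write d_i = eta(dot zeta_i), D = D(tau, zeta), and d'_i, D' likewise for
   zeta'.  As |gamma'| <= 1, |X'_i - X_i| <= |d'_i/D' - d_i/D|
   <= |d'_i - d_i|/D' + d_i |D - D'|/(D D'), and summing with sum d_i <= D
   gives (sum |d'_i - d_i| + |D - D'|)/D'.  Since eta is 1-Lipschitz, the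
   first sum is at most E = sum |dot zeta'_i - dot zeta_i|, and |D - D'| <= 2E
   because the argument of eta(gamma - S_n) moves by at most E as well.
   D, D' > 0 because Omega is additively closed and gamma avoids Omega. *)

Lemma rsum_le n f h :
  (forall i, (i < n)%nat -> f i <= h i) -> rsum n f <= rsum n h.
Proof.
  induction n as [|n IH]; simpl; intros Hfh; [lra|].
  assert (f n <= h n) by (apply Hfh; lia).
  assert (rsum n f <= rsum n h) by (apply IH; intros; apply Hfh; lia).
  lra.
Qed.

Lemma rsum_ge0 n f : (forall i, (i < n)%nat -> 0 <= f i) -> 0 <= rsum n f.
Proof.
  intros Hf. replace 0 with (rsum n (fun _ => 0)).
  - apply rsum_le; exact Hf.
  - induction n as [|n IH]; simpl; [reflexivity|].
    rewrite IH; [lra|intros; apply Hf; lia].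
Qed.

Lemma rsum_eq0_nonneg n f :
  (forall i, (i < n)%nat -> 0 <= f i) -> rsum n f = 0 ->
  forall i, (i < n)%nat -> f i = 0.
Proof.
  induction n as [|n IH]; simpl; intros Hf Hsum i Hi; [lia|].
  assert (0 <= f n) by (apply Hf; lia).
  assert (0 <= rsum n f) by (apply rsum_ge0; intros; apply Hf; lia).
  destruct (Nat.eq_dec i n) as [->|Hin]; [lra|].
  apply IH; [intros; apply Hf; lia | lra | lia].
Qed.

Lemma rsum_plus n f h : rsum n (fun i => f i + h i) = rsum n f + rsum n h.
Proof. induction n as [|n IH]; simpl; [lra|]. rewrite IH; lra. Qed.

Lemma rsum_scal n c f : rsum n (fun i => c * f i) = c * rsum n f.
Proof. induction n as [|n IH]; simpl; [lra|]. rewrite IH; lra. Qed.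

Lemma rsum_minus n f h : rsum n (fun i => f i - h i) = rsum n f - rsum n h.
Proof. induction n as [|n IH]; simpl; [lra|]. rewrite IH; lra. Qed.

Lemma Rabs_rsum_le n f : Rabs (rsum n f) <= rsum n (fun i => Rabs (f i)).
Proof.
  induction n as [|n IH]; simpl; [rewrite Rabs_R0; lra|].
  eapply Rle_trans; [apply Rabs_triang | lra].
Qed.

Lemma csum_minus n f h : (csum n f - csum n h)%C = csum n (fun i => f i - h i)%C.
Proof. induction n as [|n IH]; simpl; [ring|]. rewrite <- IH. ring. Qed.

Lemma Cmod_csum_le n f : Cmod (csum n f) <= rsum n (fun i => Cmod (f i)).
Proof.
  induction n as [|n IH]; simpl; [rewrite Cmod_0; lra|].
  eapply Rle_trans; [apply Cmod_triangle | lra].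
Qed.

Lemma csum_closed (P : C -> Prop) n f :
  P (RtoC 0) -> (forall z w, P z -> P w -> P (z + w)%C) ->
  (forall i, (i < n)%nat -> P (f i)) -> P (csum n f).
Proof.
  intros P0 Padd Pf. induction n as [|n IH]; simpl; [exact P0|].
  apply Padd; [apply IH; intros; apply Pf; lia | apply Pf; lia].
Qed.

Lemma Rabs_ratio_diff_le x x' D D' :
  0 < D -> 0 < D' -> 0 <= x ->
  Rabs (x' / D' - x / D) <= / D' * Rabs (x' - x) + Rabs (D - D') / (D * D') * x.
Proof.
  intros HD HD' Hx.
  replace (x' / D' - x / D) with (/ D' * (x' - x) + (D - D') / (D * D') * x)
    by (field; lra).
  eapply Rle_trans; [apply Rabs_triang|].
  rewrite !Rabs_mult, Rabs_div, Rabs_inv by nra.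
  rewrite (Rabs_right D'), (Rabs_right (D * D')), (Rabs_right x) by nra.
  lra.
Qed.

Lemma rsum_ratio_diff_le n d d' D D' :
  0 < D -> 0 < D' -> (forall i, (i < n)%nat -> 0 <= d i) -> rsum n d <= D ->
  rsum n (fun i => Rabs (d' i / D' - d i / D))
  <= / D' * (rsum n (fun i => Rabs (d' i - d i)) + Rabs (D - D')).
Proof.
  intros HD HD' Hd HdD.
  eapply Rle_trans.
  { apply rsum_le. intros i Hi. apply Rabs_ratio_diff_le; auto. }
  rewrite rsum_plus, !rsum_scal.
  assert (Hsum : 0 <= rsum n d) by (apply rsum_ge0; exact Hd).
  assert (Hr : Rabs (D - D') / (D * D') * rsum n d <= / D' * Rabs (D - D')).
  { apply Rle_trans with (Rabs (D - D') / (D * D') * D).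
    - apply Rmult_le_compat_l; [|exact HdD].
      apply Rdiv_le_0_compat; [apply Rabs_pos | nra].
    - right. field. lra. }
  lra.
Qed.

Section LipschitzWeight.

Variable eta : C -> R.
Hypothesis eta_lip : forall z w, Rabs (eta z - eta w) <= Cmod (z - w).

Lemma rsum_eta_dist_le n (zeta zeta' : nat -> R -> C) :
  rsum n (fun i => Rabs (eta (pi_Omega (zeta' i)) - eta (pi_Omega (zeta i))))
  <= rsum n (fun i => Cmod (pi_Omega (zeta' i) - pi_Omega (zeta i))).
Proof. apply rsum_le. intros i _. apply eta_lip. Qed.

Lemma S_n_dist_le n (zeta zeta' : nat -> R -> C) :
  Cmod (S_n n zeta' - S_n n zeta)
  <= rsum n (fun i => Cmod (pi_Omega (zeta' i) - pi_Omega (zeta i))).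
Proof. unfold S_n. rewrite csum_minus. apply Cmod_csum_le. Qed.

Lemma D_fun_dist_le g n tau (zeta zeta' : nat -> R -> C) :
  Rabs (D_fun eta g n tau zeta - D_fun eta g n tau zeta')
  <= 2 * rsum n (fun i => Cmod (pi_Omega (zeta' i) - pi_Omega (zeta i))).
Proof.
  unfold D_fun.
  set (r := eta (g tau - S_n n zeta')%C - eta (g tau - S_n n zeta)%C).
  replace (_ - _) with
    (- (rsum n (fun i => eta (pi_Omega (zeta' i)) - eta (pi_Omega (zeta i))) + r))
    by (unfold r; rewrite rsum_minus; lra).
  rewrite Rabs_Ropp.
  assert (Hr : Rabs r <= Cmod (S_n n zeta' - S_n n zeta)).
  { unfold r. eapply Rle_trans; [apply eta_lip|].
    replace (g tau - S_n n zeta' - (g tau - S_n n zeta))%C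
      with (- (S_n n zeta' - S_n n zeta))%C by ring.
    rewrite Cmod_opp. apply Rle_refl. }
  pose proof (Rabs_rsum_le n
    (fun i => eta (pi_Omega (zeta' i)) - eta (pi_Omega (zeta i)))).
  pose proof (rsum_eta_dist_le n zeta zeta').
  pose proof (S_n_dist_le n zeta zeta').
  pose proof (Rabs_triang
    (rsum n (fun i => eta (pi_Omega (zeta' i)) - eta (pi_Omega (zeta i)))) r).
  lra.
Qed.

End LipschitzWeight.

Lemma rsum_le_D_fun eta g n tau (zeta : nat -> R -> C) :
  (forall z, 0 <= eta z) ->
  rsum n (fun i => eta (pi_Omega (zeta i))) <= D_fun eta g n tau zeta.
Proof.
  intros eta_ge0. unfold D_fun.
  pose proof (eta_ge0 (g tau - S_n n zeta)%C). lra.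
Qed.

Lemma D_fun_pos (Om : C -> Prop) eta g n tau (zeta : nat -> R -> C) :
  good_Omega Om -> ~ Om (g tau) ->
  (forall z, 0 <= eta z) -> (forall z, eta z = 0 <-> Om z) ->
  0 < D_fun eta g n tau zeta.
Proof.
  intros [_ [_ [Om_add Om0]]] Hg eta_ge0 eta_zero.
  pose proof (rsum_le_D_fun eta g n tau zeta eta_ge0) as Hsum.
  pose proof (rsum_ge0 n (fun i => eta (pi_Omega (zeta i))) (fun i _ => eta_ge0 _)).
  pose proof (eta_ge0 (g tau - S_n n zeta)%C).
  destruct (Rle_lt_dec (D_fun eta g n tau zeta) 0) as [HD|HD]; [exfalso|exact HD].
  unfold D_fun in HD.
  assert (HS : Om (S_n n zeta)).
  { unfold S_n. apply csum_closed; auto. intros i Hi. apply eta_zero.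
    apply (rsum_eq0_nonneg n (fun i => eta (pi_Omega (zeta i))));
      auto; lra. }
  assert (Hrest : Om (g tau - S_n n zeta)%C) by (apply eta_zero; lra).
  apply Hg. replace (g tau) with ((g tau - S_n n zeta) + S_n n zeta)%C by ring.
  auto.
Qed.

Lemma Cmod_X_fun_sub_le eta g g' n tau (zeta zeta' : nat -> R -> C) i :
  Cmod (g' tau) <= 1 ->
  Cmod (X_fun eta g g' n tau zeta' i - X_fun eta g g' n tau zeta i)
  <= Rabs (eta (pi_Omega (zeta' i)) / D_fun eta g n tau zeta'
           - eta (pi_Omega (zeta i)) / D_fun eta g n tau zeta).
Proof.
  intros Hg'. unfold X_fun.
  set (q := eta (pi_Omega (zeta' i)) / D_fun eta g n tau zeta'
            - eta (pi_Omega (zeta i)) / D_fun eta g n tau zeta).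
  replace (_ - _)%C with (RtoC q * g' tau)%C by (unfold q; rewrite RtoC_minus; ring).
  rewrite Cmod_mult, Cmod_R.
  pose proof (Rabs_pos q). nra.
Qed.

Theorem lemma3 (Om : C -> Prop) (a b : R) (g g' : R -> C) (eta : C -> R)
  (n : nat) (zeta zeta' : nat -> R -> C) (tau : R) :
  good_Omega Om ->
  C1_on a b g g' ->
  (forall t, a <= t <= b -> ~ Om (g t)) ->
  (forall t, a <= t <= b -> Cmod (g' t) <= 1) ->
  (forall z, 0 <= eta z) ->
  (forall z w, Rabs (eta z - eta w) <= Cmod (z - w)) ->
  (forall z, eta z = 0 <-> Om z) ->
  (forall i, (i < n)%nat -> S_Omega_path Om (zeta i)) ->
  (forall i, (i < n)%nat -> S_Omega_path Om (zeta' i)) ->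
  a <= tau <= b ->
  rsum n (fun i => Cmod (X_fun eta g g' n tau zeta' i - X_fun eta g g' n tau zeta i))
  <= 3 / D_fun eta g n tau zeta'
     * rsum n (fun i => Cmod (pi_Omega (zeta' i) - pi_Omega (zeta i))).
Proof.
  intros HOm _ Hg Hg' eta_ge0 eta_lip eta_zero _ _ Htau.
  pose proof (D_fun_pos Om eta g n tau zeta HOm (Hg tau Htau) eta_ge0 eta_zero) as HD.
  pose proof (D_fun_pos Om eta g n tau zeta' HOm (Hg tau Htau) eta_ge0 eta_zero) as HD'.
  eapply Rle_trans.
  { apply rsum_le. intros i _. apply Cmod_X_fun_sub_le, Hg', Htau. }
  eapply Rle_trans.
  { apply rsum_ratio_diff_le; auto using rsum_le_D_fun. }
  pose proof (rsum_eta_dist_le eta eta_lip n zeta zeta').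
  pose proof (D_fun_dist_le eta eta_lip g n tau zeta zeta').
  replace (3 / D_fun eta g n tau zeta') with (/ D_fun eta g n tau zeta' * 3)
    by (unfold Rdiv; ring).
  rewrite Rmult_assoc.
  apply Rmult_le_compat_l; [left; apply Rinv_0_lt_compat, HD' | lra].
Qed.
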